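(* Let $\alpha>0$, $\beta_m>\alpha$, $\tau=1/(\beta_m-\alpha)$ and $$\beta(t)=\alpha+\frac{2t/\tau^2}{1+t^2/\tau^2}.$$ Let $S_0>0$, $I_0>0$ and let $(S(t),I(t),R(t))$ be the solution of $$\dot S=-\frac{\beta(t)SI}{S+I},\qquad \dot I=\frac{\beta(t)SI}{S+I}-\alpha I,\qquad \dot R=\alpha I$$ with $S(0)=S_0$, $I(0)=I_0$. Writing $k=\sqrt{\frac{I_0}{S_0+I_0}}$, for $t\ge 0$, $$S(t)=S_0\left(\frac{S_0+I_0}{S_0+I_0(1+t^2/\tau^2)}\right)\exp\left[\alpha\,\frac{S_0}{S_0+I_0}\,\frac{\arctan(k\,t/\tau)}{k/\tau}\right]e^{-\alpha t},$$ $$I(t)=I_0\left(1+\frac{t^2}{\tau^2}\right)\left(\frac{S_0+I_0}{S_0+I_0(1+t^2/\tau^2)}\right)\exp\left[\alpha\,\frac{S_0}{S_0+I_0}\,\frac{\arctan(k\,t/\tau)}{k/\tau}\right]e^{-\alpha t}.$$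
   Context: Modified SIR epidemiological model with constant recovery rate $\alpha$ and time-dependent transmission rate $\beta(t)$, here having its maximum value $\beta_m$ at $t=\tau$. *)

From Stdlib Require Import Reals Lra.
From Coquelicot Require Import Coquelicot.
Open Scope R_scope.

Definition tau (alpha beta_m : R) : R := 1 / (beta_m - alpha).

Definition beta (alpha beta_m t : R) : R :=
  alpha + (2 * t / (tau alpha beta_m) ^ 2) / (1 + t ^ 2 / (tau alpha beta_m) ^ 2).

(* Where S, I > 0, the ratio I/S satisfies (I/S)' = (beta - alpha) I/S, and
   beta - alpha = g'/g for g t = 1 + t^2/tau^2, so I/S = (I0/S0) g.  Substituting
   this into the S-equation leaves the linear equation
   S' = - beta I0 g / (S0 + I0 g) S, which the closed form solves as well (its
   arctan term is a primitive of (S0 + I0)/(S0 + I0 g) because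
   k^2 = I0/(S0 + I0)); two solutions of one linear equation are proportional.
   Positivity of S and I, which keeps S + I away from 0, propagates along
   [0, oo) by real induction: the closed form is positive and S, I are
   continuous. *)

From Stdlib Require Import Reals Lra Classical.
From Coquelicot Require Import Coquelicot.
Open Scope R_scope.

Lemma is_derive_continuous (f : R -> R) (x l : R) :
  is_derive f x l -> continuous f x.
Proof.
  intros Hf. apply (ex_derive_continuous (K := R_AbsRing) (V := R_NormedModule)).
  now exists l.
Qed.

Lemma is_derive_0_const (f : R -> R) (a b : R) :
  a <= b -> (forall x, a <= x <= b -> is_derive f x 0) -> f b = f a.
Proof.
  intros Hab Hf.
  destruct (MVT_gen f a b (fun _ => 0)) as [c [_ Hc]].
  - intros x Hx. apply Hf. rewrite Rmin_left, Rmax_right in Hx by lra. lra.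
  - intros x Hx. rewrite Rmin_left, Rmax_right in Hx by lra.
    apply continuity_pt_filterlim, (is_derive_continuous _ _ 0), Hf, Hx.
  - lra.
Qed.

Lemma linear_ode_solutions_proportional (a y z : R -> R) (s0 s : R) :
  s0 <= s ->
  (forall x, s0 <= x <= s -> is_derive y x (a x * y x)) ->
  (forall x, s0 <= x <= s -> is_derive z x (a x * z x)) ->
  (forall x, s0 <= x <= s -> z x <> 0) ->
  y s * z s0 = y s0 * z s.
Proof.
  intros Hs Hy Hz Hz0.
  assert (Hratio : y s / z s = y s0 / z s0).
  { apply (is_derive_0_const (fun x => y x / z x)); [exact Hs |].
    intros x Hx.
    replace 0 with ((a x * y x * z x - y x * (a x * z x)) / z x ^ 2) by (field; auto).
    apply is_derive_div; auto. }
  assert (z s <> 0) by (apply Hz0; lra).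
  assert (z s0 <> 0) by (apply Hz0; lra).
  replace (y s) with (y s / z s * z s) by (field; auto).
  rewrite Hratio. field. auto.
Qed.

Lemma continuous_eq_from_left (f h : R -> R) (a T : R) :
  a < T -> continuous f T -> continuous h T ->
  (forall x, a < x < T -> f x = h x) -> f T = h T.
Proof.
  intros HaT Hf Hh Hfh.
  apply (filterlim_locally_unique (F := at_left T) h).
  - apply (filterlim_ext_loc f).
    + assert (Hd : 0 < T - a) by lra.
      exists (mkposreal _ Hd). intros x Hx Hlt.
      apply Hfh. apply Rabs_def2 in Hx. unfold minus, plus, opp in Hx; simpl in Hx. lra.
    + apply (filterlim_filter_le_1 (F := locally T)); [apply filter_le_within | exact Hf].
  - apply (filterlim_filter_le_1 (F := locally T)); [apply filter_le_within | exact Hh].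
Qed.

Lemma real_induction (Q : R -> Prop) :
  Q 0 ->
  (forall T, 0 < T -> (forall x, 0 <= x < T -> Q x) -> Q T) ->
  (forall s, 0 <= s -> Q s -> locally s Q) ->
  forall t, 0 <= t -> Q t.
Proof.
  intros HQ0 Hclosed Hopen t Ht.
  set (A := fun s => s <= t /\ forall x, 0 <= x <= s -> Q x).
  assert (HA0 : A 0).
  { split; [exact Ht |]. intros x Hx. replace x with 0 by lra. exact HQ0. }
  destruct (completeness A) as [T [HTub HTlub]].
  - exists t. intros s [Hs _]. exact Hs.
  - exists 0. exact HA0.
  - assert (HT0 : 0 <= T) by (apply HTub, HA0).
    assert (HTt : T <= t) by (apply HTlub; intros s [Hs _]; exact Hs).
    assert (Hbelow : forall x, 0 <= x < T -> Q x).
    { intros x Hx. destruct (classic (Q x)) as [| HnQ]; [assumption | exfalso].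
      assert (T <= x); [| lra].
      apply HTlub. intros s [_ Hs].
      destruct (Rle_lt_dec x s); [exfalso; apply HnQ, Hs; lra | lra]. }
    assert (HQT : forall x, 0 <= x <= T -> Q x).
    { intros x Hx. destruct (Rlt_or_le x T); [apply Hbelow; lra |].
      replace x with T by lra.
      destruct (Rle_lt_or_eq_dec 0 T HT0) as [HT | <-]; [now apply Hclosed | exact HQ0]. }
    destruct (Rle_lt_or_eq_dec T t HTt) as [HTt' | <-]; [exfalso | apply HQT; lra].
    destruct (Hopen T HT0 (HQT T (conj HT0 (Rle_refl T)))) as [eps Heps].
    set (s := Rmin (T + eps / 2) t).
    assert (Hs : T < s <= T + eps / 2).
    { split; [apply Rmin_glb_lt; destruct eps; simpl; lra | apply Rmin_l]. }
    assert (HAs : A s).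
    { split; [apply Rmin_r |]. intros x Hx.
      destruct (Rle_lt_dec x T); [apply HQT; lra |].
      apply Heps. change (Rabs (x - T) < eps). rewrite Rabs_right by lra.
      destruct eps; simpl in *; lra. }
    specialize (HTub s HAs). lra.
Qed.

Section SIRModel.

Variables (alpha : R) (b S I : R -> R).

Hypothesis S_deriv :
  forall t, 0 <= t -> is_derive S t (- (b t * S t * I t / (S t + I t))).
Hypothesis I_deriv :
  forall t, 0 <= t -> is_derive I t (b t * S t * I t / (S t + I t) - alpha * I t).

Lemma SIR_ratio_deriv t : 0 <= t -> 0 < S t -> 0 < I t ->
  is_derive (fun x => I x / S x) t ((b t - alpha) * (I t / S t)).
Proof.
  intros Ht HS HI.
  replace ((b t - alpha) * (I t / S t)) with
    (((b t * S t * I t / (S t + I t) - alpha * I t) * S t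
      - I t * - (b t * S t * I t / (S t + I t))) / S t ^ 2) by (field; lra).
  apply is_derive_div; auto; lra.
Qed.

Lemma SIR_susceptible_deriv t : 0 <= t -> 0 < S t -> 0 < I t ->
  is_derive S t (- (b t * (I t / S t) / (1 + I t / S t)) * S t).
Proof.
  intros Ht HS HI.
  replace (- (b t * (I t / S t) / (1 + I t / S t)) * S t) with
    (- (b t * S t * I t / (S t + I t))).
  - now apply S_deriv.
  - field. split; lra.
Qed.

End SIRModel.

Section ClosedForm.

Variables alpha beta_m S0 I0 : R.
Hypotheses (Hbeta_m : alpha < beta_m) (HS0 : 0 < S0) (HI0 : 0 < I0).

Local Notation ta := (tau alpha beta_m).
Local Notation k := (sqrt (I0 / (S0 + I0))).

Lemma tau_pos : 0 < ta.
Proof. unfold tau. apply Rdiv_lt_0_compat; lra. Qed.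

Definition ratio_growth t := 1 + t ^ 2 / ta ^ 2.

Lemma ratio_growth_ge_1 t : 1 <= ratio_growth t.
Proof.
  unfold ratio_growth. pose proof tau_pos.
  assert (0 <= t ^ 2 / ta ^ 2); [| lra].
  apply Rdiv_le_0_compat; [apply pow2_ge_0 | apply pow_lt; lra].
Qed.

Lemma ratio_growth_0 : ratio_growth 0 = 1.
Proof. pose proof tau_pos. unfold ratio_growth. field. lra. Qed.

Lemma ratio_growth_deriv t :
  is_derive ratio_growth t ((beta alpha beta_m t - alpha) * ratio_growth t).
Proof.
  pose proof tau_pos as Hta. pose proof (pow_lt ta 2 Hta). pose proof (pow2_ge_0 t).
  unfold ratio_growth, beta. auto_derive; [exact I |].
  field. split; lra.
Qed.

Definition arctan_primitive t := atan (k * t / ta) / (k / ta).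

Lemma arctan_primitive_deriv t :
  is_derive arctan_primitive t ((S0 + I0) / (S0 + I0 * ratio_growth t)).
Proof.
  pose proof tau_pos as Hta. pose proof (pow_lt ta 2 Hta). pose proof (pow2_ge_0 t).
  assert (Hk : 0 < k) by (apply sqrt_lt_R0, Rdiv_lt_0_compat; lra).
  assert (Hk2 : k * k = I0 / (S0 + I0)) by (apply sqrt_sqrt, Rlt_le, Rdiv_lt_0_compat; lra).
  unfold arctan_primitive, ratio_growth. auto_derive; [exact I |].
  replace (k * t * / ta * (k * t * / ta * 1)) with (k * k * (t ^ 2 / ta ^ 2))
    by (simpl; field; lra).
  rewrite Hk2. field. repeat split; nra.
Qed.

Definition susceptible_sol t :=
  S0 * ((S0 + I0) / (S0 + I0 * ratio_growth t)) *
  (exp (alpha * (S0 / (S0 + I0)) * arctan_primitive t) * exp (- alpha * t)).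

Definition infected_sol t :=
  I0 * ratio_growth t * ((S0 + I0) / (S0 + I0 * ratio_growth t)) *
  (exp (alpha * (S0 / (S0 + I0)) * arctan_primitive t) * exp (- alpha * t)).

Lemma infected_sol_eq t : infected_sol t = I0 / S0 * ratio_growth t * susceptible_sol t.
Proof.
  pose proof (ratio_growth_ge_1 t). unfold infected_sol, susceptible_sol.
  field. split; nra.
Qed.

Lemma susceptible_sol_pos t : 0 < susceptible_sol t.
Proof.
  pose proof (ratio_growth_ge_1 t). unfold susceptible_sol.
  repeat apply Rmult_lt_0_compat; try apply exp_pos; try lra.
  apply Rinv_0_lt_compat; nra.
Qed.

Lemma infected_sol_pos t : 0 < infected_sol t.
Proof.
  pose proof (ratio_growth_ge_1 t). rewrite infected_sol_eq.
  apply Rmult_lt_0_compat; [| apply susceptible_sol_pos].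
  apply Rmult_lt_0_compat; [apply Rdiv_lt_0_compat |]; lra.
Qed.

Lemma susceptible_sol_0 : susceptible_sol 0 = S0.
Proof.
  unfold susceptible_sol, arctan_primitive.
  rewrite ratio_growth_0, Rmult_0_r, Rdiv_0_l, atan_0, Rdiv_0_l, !Rmult_0_r, exp_0.
  field. lra.
Qed.

Lemma susceptible_sol_deriv t :
  is_derive susceptible_sol t
    (- (beta alpha beta_m t * (I0 / S0 * ratio_growth t) / (1 + I0 / S0 * ratio_growth t))
     * susceptible_sol t).
Proof.
  pose proof (ratio_growth_ge_1 t).
  unfold susceptible_sol. auto_derive.
  - repeat split; [eexists; apply ratio_growth_deriv | nra | eexists; apply arctan_primitive_deriv].
  - change (Derive (fun x => ratio_growth x) t) with (Derive ratio_growth t).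
    change (Derive (fun x => arctan_primitive x) t) with (Derive arctan_primitive t).
    rewrite (is_derive_unique _ _ _ (ratio_growth_deriv t)),
      (is_derive_unique _ _ _ (arctan_primitive_deriv t)).
    field. repeat split; nra.
Qed.

Lemma infected_sol_continuous t : continuous infected_sol t.
Proof.
  apply (continuous_ext (fun x => I0 / S0 * ratio_growth x * susceptible_sol x)).
  { intros x. symmetry. apply infected_sol_eq. }
  apply (continuous_mult (K := R_AbsRing)); [apply (continuous_mult (K := R_AbsRing)) |].
  - apply continuous_const.
  - exact (is_derive_continuous _ _ _ (ratio_growth_deriv t)).
  - exact (is_derive_continuous _ _ _ (susceptible_sol_deriv t)).
Qed.

Variables S I : R -> R.
Hypotheses (S_init : S 0 = S0) (I_init : I 0 = I0).
Hypothesis S_deriv : forall t, 0 <= t ->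
  is_derive S t (- (beta alpha beta_m t * S t * I t / (S t + I t))).
Hypothesis I_deriv : forall t, 0 <= t ->
  is_derive I t (beta alpha beta_m t * S t * I t / (S t + I t) - alpha * I t).

Lemma SIR_ratio_of_pos s : 0 <= s ->
  (forall x, 0 <= x <= s -> 0 < S x /\ 0 < I x) ->
  I s / S s = I0 / S0 * ratio_growth s.
Proof.
  intros Hs Hpos.
  assert (Hprop := linear_ode_solutions_proportional
    (fun x => beta alpha beta_m x - alpha) (fun x => I x / S x) ratio_growth 0 s Hs).
  rewrite ratio_growth_0, S_init, I_init, Rmult_1_r in Hprop. apply Hprop.
  - intros x Hx. destruct (Hpos x Hx).
    apply (SIR_ratio_deriv alpha _ S I); auto; lra.
  - intros x _. apply ratio_growth_deriv.
  - intros x _. pose proof (ratio_growth_ge_1 x). lra.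
Qed.

Lemma SIR_closed_form_of_pos s : 0 <= s ->
  (forall x, 0 <= x <= s -> 0 < S x /\ 0 < I x) ->
  S s = susceptible_sol s /\ I s = infected_sol s.
Proof.
  intros Hs Hpos.
  assert (Hratio : forall x, 0 <= x <= s -> I x / S x = I0 / S0 * ratio_growth x).
  { intros x Hx. apply SIR_ratio_of_pos; [apply Hx |].
    intros y Hy. apply Hpos. lra. }
  assert (HS : S s = susceptible_sol s).
  { assert (Hprop := linear_ode_solutions_proportional
      (fun x => - (beta alpha beta_m x * (I0 / S0 * ratio_growth x)
                   / (1 + I0 / S0 * ratio_growth x)))
      S susceptible_sol 0 s Hs).
    rewrite susceptible_sol_0, S_init in Hprop.
    apply (Rmult_eq_reg_l S0); [rewrite <- Hprop | lra].
    - ring.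
    - intros x Hx. destruct (Hpos x Hx). rewrite <- (Hratio x Hx).
      apply (SIR_susceptible_deriv (beta alpha beta_m) S I); auto; lra.
    - intros x _. apply susceptible_sol_deriv.
    - intros x _. pose proof (susceptible_sol_pos x). lra. }
  split; [exact HS |].
  destruct (Hpos s (conj Hs (Rle_refl s))).
  rewrite infected_sol_eq, <- HS, <- (Hratio s (conj Hs (Rle_refl s))).
  field. lra.
Qed.

Lemma SIR_pos t : 0 <= t -> 0 < S t /\ 0 < I t.
Proof.
  revert t. apply (real_induction (fun t => 0 < S t /\ 0 < I t)).
  - rewrite S_init, I_init. auto.
  - intros T HT Hbelow.
    assert (Hform : forall x, 0 < x < T -> S x = susceptible_sol x /\ I x = infected_sol x).
    { intros x Hx. apply SIR_closed_form_of_pos; [lra |].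
      intros y Hy. apply Hbelow. lra. }
    assert (HST : S T = susceptible_sol T).
    { apply (continuous_eq_from_left _ _ 0 T HT).
      - exact (is_derive_continuous _ _ _ (S_deriv T ltac:(lra))).
      - exact (is_derive_continuous _ _ _ (susceptible_sol_deriv T)).
      - intros x Hx. apply Hform, Hx. }
    assert (HIT : I T = infected_sol T).
    { apply (continuous_eq_from_left _ _ 0 T HT).
      - exact (is_derive_continuous _ _ _ (I_deriv T ltac:(lra))).
      - apply infected_sol_continuous.
      - intros x Hx. apply Hform, Hx. }
    rewrite HST, HIT. split; [apply susceptible_sol_pos | apply infected_sol_pos].
  - intros s Hs [HSs HIs]. apply filter_and.
    + apply (is_derive_continuous _ _ _ (S_deriv s Hs)), (open_gt 0), HSs.
    + apply (is_derive_continuous _ _ _ (I_deriv s Hs)), (open_gt 0), HIs.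
Qed.

Lemma SIR_closed_form t : 0 <= t ->
  S t = susceptible_sol t /\ I t = infected_sol t.
Proof.
  intros Ht. apply SIR_closed_form_of_pos; [exact Ht |].
  intros x Hx. apply SIR_pos, Hx.
Qed.

End ClosedForm.

Theorem mainTheorem6 (alpha beta_m S0 I0 : R) (S I Rc : R -> R) :
  0 < alpha -> alpha < beta_m -> 0 < S0 -> 0 < I0 ->
  S 0 = S0 -> I 0 = I0 ->
  (forall t, 0 <= t ->
     is_derive S t (- (beta alpha beta_m t * S t * I t / (S t + I t))) /\
     is_derive I t (beta alpha beta_m t * S t * I t / (S t + I t) - alpha * I t) /\
     is_derive Rc t (alpha * I t)) ->
  forall t, 0 <= t ->
    let ta := tau alpha beta_m in
    let k := sqrt (I0 / (S0 + I0)) in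
    let E := exp (alpha * (S0 / (S0 + I0)) * (atan (k * t / ta) / (k / ta))) * exp (- alpha * t) in
    S t = S0 * ((S0 + I0) / (S0 + I0 * (1 + t ^ 2 / ta ^ 2))) * E /\
    I t = I0 * (1 + t ^ 2 / ta ^ 2) * ((S0 + I0) / (S0 + I0 * (1 + t ^ 2 / ta ^ 2))) * E.
Proof.
  intros _ Hbeta_m HS0 HI0 S_init I_init Hderiv t Ht.
  exact (SIR_closed_form alpha beta_m S0 I0 Hbeta_m HS0 HI0 S I S_init I_init
    (fun x Hx => proj1 (Hderiv x Hx)) (fun x Hx => proj1 (proj2 (Hderiv x Hx))) t Ht).
Qed.
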